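(* Let $F$ be a finite extension of $\mathbb{Q}_p$ with ring of integers $\mathcal{O}_F$ and uniformiser $\pi$, let $n\ge1$, $m\ge1$, $G=\mathrm{GL}_n(F)$, $G_m=1+\pi^mM_n(\mathcal{O}_F)$ and $G^m=\det^{-1}(1+\pi^m\mathcal{O}_F)\subset G$. Then the normal closure of $G_m$ in $G$ (the smallest normal subgroup of $G$ containing $G_m$) is $G^m$. *)

From mathcomp Require Import all_boot all_algebra.
Set Implicit Arguments. Unset Strict Implicit. Unset Printing Implicit Defensive.
Import GRing.Theory.
Local Open Scope ring_scope.

(* A "finite extension of Q_p", presented intrinsically as a complete
   discretely valued field of characteristic 0 whose residue field is finite
   of characteristic p.  [O] is the ring of integers (as a predicate on F)
   and [pi] a uniformiser. *)
Definition is_p_adic_field (p : nat) (F : fieldType) (O : F -> Prop) (pi : F)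
  : Prop :=
  prime p /\
      [/\ O 0, O 1, (forall x y, O x -> O y -> O (x - y))
        & (forall x y, O x -> O y -> O (x * y))] /\
      [/\ O pi, pi != 0 & ~ O pi^-1] /\
      (forall x : F, x != 0 ->
         exists (u : F) (k : int), [/\ O u, O u^-1 & x = u * pi ^ k]) /\
      (forall k : nat, (k.+1)%:R != 0 :> F) /\
      (* residue characteristic p *)
      (exists a, O a /\ p%:R = pi * a) /\
      (* the residue field O / pi O is finite *)
      (exists s : seq F, (forall y, y \in s -> O y) /\
         forall x, O x -> exists2 y, y \in s & exists z, O z /\ x - y = pi * z) /\
      (* O is complete for the pi-adic topology *)
      (forall u : nat -> F, (forall j, O (u j)) ->
         (forall k : nat, exists N, forall i j, (N <= i)%N -> (N <= j)%N ->
             exists z, O z /\ u i - u j = pi ^+ k * z) ->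
         exists2 l, O l & forall k : nat, exists N, forall i, (N <= i)%N ->
             exists z, O z /\ u i - l = pi ^+ k * z).

Definition congr_sub (F : fieldType) (O : F -> Prop) (pi : F) (n m : nat)
  (A : 'M[F]_n) : Prop :=
  exists B : 'M[F]_n, (forall i j, O (B i j)) /\ A = 1%:M + pi ^+ m *: B.

Definition det_congr_sub (F : fieldType) (O : F -> Prop) (pi : F) (n m : nat)
  (A : 'M[F]_n) : Prop :=
  A \in unitmx /\ exists a, O a /\ \det A = 1 + pi ^+ m * a.

Definition mx_normal_subgroup (F : fieldType) (n : nat) (H : 'M[F]_n -> Prop)
  : Prop :=
  [/\ (forall A, H A -> A \in unitmx),
      H 1%:M,
      (forall A B, H A -> H B -> H (A *m B)),
      (forall A, H A -> H (invmx A))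
    & (forall g A, g \in unitmx -> H A -> H (g *m A *m invmx g))].

Definition normal_closure (F : fieldType) (n : nat) (S : 'M[F]_n -> Prop)
  (A : 'M[F]_n) : Prop :=
  forall H, mx_normal_subgroup H -> (forall B, S B -> H B) -> H A.

(* G^m is normal in GL_n(F) and contains G_m: the determinant is a polynomial
   with integer coefficients in the entries, so det (1 + pi^m B) = 1 mod pi^m,
   and 1 + pi^m O_F is a group because every 1 + pi b with b in O_F is a unit
   of O_F.  Conversely, a normal subgroup H containing G_m contains the
   transvection 1 + pi^m E_ij, hence, conjugating by diagonal matrices, every
   transvection.  Gaussian elimination by transvections turns any invertible A
   into diag(1, ..., 1, det A), which lies in G_m when A lies in G^m; so A is
   in H. *)

From mathcomp Require Import all_boot all_algebra.
From mathcomp Require Import ring.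
Set Implicit Arguments. Unset Strict Implicit. Unset Printing Implicit Defensive.
Import GRing.Theory.
Local Open Scope ring_scope.

Section Transvections.
Variables (F : fieldType) (n : nat).
Implicit Types (i j k r c : 'I_n) (t d : F) (B T : 'M[F]_n).

Definition transvection i j t : 'M[F]_n := 1%:M + t *: delta_mx i j.

Definition dilation i d : 'M[F]_n := 1%:M + (d - 1) *: delta_mx i i.

Lemma mul_add1_delta_mx i j t B r c :
  ((1%:M + t *: delta_mx i j) *m B) r c = B r c + (r == i)%:R * t * B j c.
Proof.
rewrite mulmxDl mul1mx -scalemxAl !mxE; congr (_ + _).
rewrite (bigD1 j) //= big1 ?addr0; last by move=> l /negPf nlj; rewrite mxE nlj andbF mul0r.
by rewrite mxE eqxx andbT mulrA [t * _]mulrC.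
Qed.

Lemma transvection0 i j : transvection i j 0 = 1%:M.
Proof. by rewrite /transvection scale0r addr0. Qed.

Lemma det_transvection i j t : i != j -> \det (transvection i j t) = 1.
Proof.
wlog lt_ji : i j / (j < i)%N => [wlog_lt | nij].
  case: (ltngtP i j) => [lt_ij|lt_ji|/val_inj->]; last by rewrite eqxx.
    move=> _; rewrite -det_tr /transvection linearD linearZ /= trmx1 trmx_delta.
    by apply: (wlog_lt j i lt_ij); rewrite neq_ltn lt_ij orbT.
  exact: wlog_lt.
rewrite det_trig; last first.
  apply/is_trig_mxP => a b lt_ab; have /negPf nab : a != b by rewrite neq_ltn lt_ab.
  rewrite !mxE nab add0r.
  by case: (eqVneq a i) => [ai|]; case: (eqVneq b j) => [bj|];
    rewrite ?mulr0 ?addr0 //; move: lt_ab; rewrite ai bj ltnNge ltnW.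
rewrite big1 // => l _; rewrite !mxE eqxx.
by case: (eqVneq l i) => [->|]; rewrite ?(negPf nij) ?mulr0 ?addr0.
Qed.

Lemma det_dilation i d : \det (dilation i d) = d.
Proof.
rewrite det_trig; last first.
  apply/is_trig_mxP => a b lt_ab; have /negPf nab : a != b by rewrite neq_ltn lt_ab.
  rewrite !mxE nab add0r; case: (eqVneq a i) => [ai|]; last by rewrite mulr0.
  by rewrite -ai eq_sym nab mulr0.
rewrite (bigD1 i) //= big1 ?mulr1; last first.
  by move=> l /negPf nli; rewrite !mxE eqxx nli /= mulr0 addr0.
by rewrite !mxE !eqxx /= mulr1 addrC subrK.
Qed.

Lemma dilation_transvection i j d t : i != j ->
  dilation i d *m transvection i j t = transvection i j (d * t) *m dilation i d.
Proof.
move=> nij; apply/matrixP => r c; rewrite !mul_add1_delta_mx !mxE.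
case: (eqVneq r i) => [->|_]; last by rewrite /= !(mulr0, mul0r, addr0).
rewrite eqxx [c == i]eq_sym [c == j]eq_sym [j == i]eq_sym (negPf nij) /=.
ring.
Qed.

Inductive elementary : 'M[F]_n -> Prop :=
| elementary1 : elementary 1%:M
| elementaryT i j t T : i != j -> elementary T -> elementary (transvection i j t *m T).

Lemma elementary_transvection i j t : i != j -> elementary (transvection i j t).
Proof.
by move=> nij; rewrite -[transvection _ _ _]mulmx1; apply: elementaryT nij elementary1.
Qed.

Lemma elementaryM T1 T2 : elementary T1 -> elementary T2 -> elementary (T1 *m T2).
Proof.
move=> ET1 ET2; elim: ET1 => [|i j t T nij _ IH]; first by rewrite mul1mx.
by rewrite -mulmxA; apply: elementaryT.
Qed.

Lemma det_elementary T : elementary T -> \det T = 1.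
Proof.
by elim=> [|i j t T1 nij _ IH]; rewrite ?det1 // det_mulmx IH det_transvection ?mulr1.
Qed.

Lemma elementary_unitmx T : elementary T -> T \in unitmx.
Proof. by move=> ET; rewrite unitmxE det_elementary ?unitr1. Qed.

Definition idmx_cols (k : nat) B := forall i j, (j < k)%N -> B i j = (i == j)%:R.

Lemma idmx_cols_transvection (k : nat) i j t B :
  (k <= j)%N -> idmx_cols k B -> idmx_cols k (transvection i j t *m B).
Proof.
move=> le_kj idB r c lt_ck; have /negPf njc : j != c.
  by rewrite neq_ltn (leq_trans lt_ck le_kj) orbT.
by rewrite mul_add1_delta_mx !idB // njc mulr0 addr0.
Qed.

Lemma idmx_cols_pivot k B : B \in unitmx -> idmx_cols k B ->
  exists2 i : 'I_n, (k <= i)%N & B i k != 0.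
Proof.
move=> uB idB.
case: (pickP [pred i : 'I_n | (k <= i)%N && (B i k != 0)]) => [i /andP[]|no_pivot].
  by exists i.
pose w := col k B.
have wk0 j : (k <= j)%N -> B j k = 0.
  by move=> le_kj; move: (no_pivot j) => /=; rewrite le_kj => /negbFE/eqP.
have Bw : B *m w = w.
  apply/matrixP => r c; rewrite -[in RHS](mul1mx w) !mxE; apply: eq_bigr => j _.
  by rewrite !mxE; case: (ltnP j k) => [/idB->|/wk0->] //; rewrite !mulr0.
have := mulKmx uB (delta_mx k 0 - w); rewrite mulmxBr -colE Bw subrr mulmx0.
move/matrixP/(_ k 0); rewrite !mxE !eqxx wk0 // subr0 => /eqP.
by rewrite eq_sym oner_eq0.
Qed.

Lemma clear_column k B : B k k != 0 -> exists2 T, elementary T &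
  forall r c, (T *m B) r c = B r c - (r != k)%:R * (B r k / B k k) * B k c.
Proof.
move=> Bkk0.
suff [T ET TB] : exists2 T, elementary T & forall r c,
    (T *m B) r c = B r c - ((r \in enum 'I_n) && (r != k))%:R * (B r k / B k k) * B k c.
  by exists T => // r c; rewrite TB mem_enum.
elim: (enum 'I_n) (enum_uniq 'I_n) => [_|i s IHs /andP[i_s /IHs[T ET TB]]].
  by exists 1%:M => [|r c]; [exact: elementary1 | rewrite mul1mx !mul0r subr0].
case: (eqVneq i k) => [-> | nik].
  exists T => // r c; rewrite TB in_cons.
  by case: (eqVneq r k) => [->|]; rewrite ?eqxx ?andbF.
exists (transvection i k (- (B i k / B k k)) *m T); first exact: elementaryT.
move=> r c; rewrite -mulmxA mul_add1_delta_mx !TB eqxx andbF !mul0r subr0 in_cons.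
case: (eqVneq r i) => [->|_]; last by rewrite /= !mul0r addr0.
by rewrite (negPf i_s) nik /= !mul0r subr0 !mul1r mulNr.
Qed.

Lemma transvection_set_entry i r k B x : B i k != 0 ->
  (transvection r i ((x - B r k) / B i k) *m B) r k = x.
Proof. by move=> Bik0; rewrite mul_add1_delta_mx eqxx mul1r divfK // addrC subrK. Qed.

Lemma idmx_cols_normalize k B : (k.+1 < n)%N -> B \in unitmx -> idmx_cols k B ->
  exists2 T, elementary T & idmx_cols k (T *m B) /\ (T *m B) k k = 1.
Proof.
move=> lt_k1n uB idB; have [i le_ki Bik0] := idmx_cols_pivot uB idB.
case: (eqVneq i k) => [eik | nik]; last first.
  exists (transvection k i ((1 - B k k) / B i k)).
    by apply: elementary_transvection; rewrite eq_sym.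
  by split; [exact: idmx_cols_transvection | exact: transvection_set_entry].
(* Transvections cannot rescale row k, so the pivot is normalised through row
   k.+1; this is why the last column keeps the determinant. *)
pose r := Ordinal lt_k1n; have nrk : r != k by rewrite neq_ltn ltnSn orbT.
rewrite {}eik in Bik0.
set B1 := transvection r k ((1 - B r k) / B k k) *m B.
have B1rk : B1 r k = 1 by exact: transvection_set_entry.
exists (transvection k r ((1 - B1 k k) / B1 r k) *m transvection r k ((1 - B r k) / B k k)).
  by apply: elementaryT; rewrite 1?eq_sym //; exact: elementary_transvection.
rewrite -mulmxA -/B1; split; last by apply: transvection_set_entry; rewrite B1rk oner_neq0.
by do 2!apply: idmx_cols_transvection => //.
Qed.

Lemma idmx_cols_step k B : (k.+1 < n)%N -> B \in unitmx -> idmx_cols k B ->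
  exists2 T, elementary T & idmx_cols k.+1 (T *m B).
Proof.
move=> lt_k1n uB idB; have [T1 ET1 [idB1 B1kk]] := idmx_cols_normalize lt_k1n uB idB.
have [|T2 ET2 T2B1] := @clear_column k (T1 *m B); first by rewrite B1kk oner_neq0.
exists (T2 *m T1); first exact: elementaryM.
move=> r c; rewrite ltnS leq_eqVlt -mulmxA T2B1 B1kk divr1.
case/orP=> [/eqP/val_inj-> | lt_ck].
  by case: (eqVneq r k) => [->|_]; rewrite /= ?mul0r ?subr0 ?mul1r B1kk ?mulr1 ?subrr.
have /negPf nkc : k != c by rewrite neq_ltn lt_ck orbT.
by rewrite (idB1 k c lt_ck) nkc mulr0 subr0 idB1.
Qed.

Lemma idmx_cols_reduce (k : nat) B : (k < n)%N -> B \in unitmx ->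
  exists2 T, elementary T & idmx_cols k (T *m B).
Proof.
move=> + uB; elim: k => [_ | k IHk lt_k1n]; first by exists 1%:M; first exact: elementary1.
have [T ET idTB] := IHk (ltnW lt_k1n).
have uTB : T *m B \in unitmx by rewrite unitmx_mul elementary_unitmx.
have [T' ET' idT'TB] := @idmx_cols_step (Ordinal (ltnW lt_k1n)) _ lt_k1n uTB idTB.
by exists (T' *m T); [exact: elementaryM | rewrite -mulmxA].
Qed.

End Transvections.

Lemma idmx_cols_last (F : fieldType) (n : nat) (B : 'M[F]_n.+1) :
  idmx_cols n B -> B ord_max ord_max != 0 ->
  exists2 T, elementary T & T *m B = dilation ord_max (B ord_max ord_max).
Proof.
move=> idB Bmm0; have [T ET TB] := clear_column Bmm0; exists T => //.
apply/matrixP => r c; rewrite TB !mxE.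
case: (eqVneq c ord_max) => [->|ncm].
  by case: (eqVneq r ord_max) => [->|_]; rewrite /= ?mul0r ?mul1r ?divfK ?subrr; try ring.
have lt_cn : (c < n)%N.
  by rewrite ltn_neqAle -ltnS ltn_ord andbT; apply: contraNneq ncm => cn; exact/eqP/val_inj.
rewrite andbF mulr0 addr0 (idB ord_max c lt_cn) [ord_max == c]eq_sym (negPf ncm).
by rewrite mulr0 subr0 idB.
Qed.

Lemma elementary_reduction (F : fieldType) (n : nat) (A : 'M[F]_n.+1) : A \in unitmx ->
  exists2 T, elementary T & T *m A = dilation ord_max (\det A).
Proof.
move=> uA; have [T1 ET1 idB] := idmx_cols_reduce (ltnSn n) uA.
have uB : T1 *m A \in unitmx by rewrite unitmx_mul elementary_unitmx.
have [i le_ni Bi0] := @idmx_cols_pivot _ _ ord_max _ uB idB.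
have eim : i = ord_max.
  by apply/val_inj/eqP; rewrite eqn_leq le_ni andbT; exact: leq_ord.
rewrite {}eim in Bi0; have [T2 ET2 T2B] := idmx_cols_last idB Bi0.
exists (T2 *m T1); first exact: elementaryM.
rewrite -mulmxA T2B; congr dilation.
rewrite -[LHS](det_dilation (@ord_max n)) -T2B !det_mulmx.
by rewrite (det_elementary ET1) (det_elementary ET2) !mul1r.
Qed.

Section CongruenceSubgroups.
Variables (F : fieldType) (O : F -> Prop).
Hypothesis O_subring : [/\ O 0, O 1, (forall x y, O x -> O y -> O (x - y))
                         & (forall x y, O x -> O y -> O (x * y))].

Lemma O_0 : O 0. Proof. by case: O_subring. Qed.
Lemma O_1 : O 1. Proof. by case: O_subring. Qed.
Lemma O_B x y : O x -> O y -> O (x - y). Proof. by case: O_subring => _ _ + _; apply. Qed.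
Lemma O_M x y : O x -> O y -> O (x * y). Proof. by case: O_subring => _ _ _; apply. Qed.

Lemma O_N x : O x -> O (- x).
Proof. by move=> Ox; rewrite -sub0r; apply: O_B O_0 Ox. Qed.

Lemma O_D x y : O x -> O y -> O (x + y).
Proof. by move=> Ox Oy; rewrite -[y]opprK; apply: O_B Ox (O_N Oy). Qed.

Lemma O_X x k : O x -> O (x ^+ k).
Proof.
by move=> Ox; elim: k => [|k IHk]; rewrite ?expr0 ?exprS; [exact: O_1 | exact: O_M].
Qed.

Lemma O_nat k : O k%:R.
Proof. by elim: k => [|k IHk]; [exact: O_0 | rewrite mulrSr; exact: O_D IHk O_1]. Qed.

Definition congr_mod (c x y : F) := [/\ O x, O y & exists2 a, O a & x - y = c * a].

Lemma congr_mod_refl c x : O x -> congr_mod c x x.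
Proof. by move=> Ox; split => //; exists 0; [exact: O_0 | rewrite subrr mulr0]. Qed.

Lemma congr_modD c x1 x2 y1 y2 :
  congr_mod c x1 x2 -> congr_mod c y1 y2 -> congr_mod c (x1 + y1) (x2 + y2).
Proof.
case=> Ox1 Ox2 [a Oa ea] [Oy1 Oy2 [b Ob eb]]; split; try exact: O_D.
by exists (a + b); [exact: O_D | rewrite mulrDr -ea -eb; ring].
Qed.

Lemma congr_modM c x1 x2 y1 y2 :
  congr_mod c x1 x2 -> congr_mod c y1 y2 -> congr_mod c (x1 * y1) (x2 * y2).
Proof.
case=> Ox1 Ox2 [a Oa ea] [Oy1 Oy2 [b Ob eb]]; split; try exact: O_M.
exists (x1 * b + a * y2); first exact: O_D (O_M _ _) (O_M _ _).
by transitivity (x1 * (c * b) + (c * a) * y2); [rewrite -ea -eb | ]; ring.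
Qed.

Lemma det_congr_mod n c (A B : 'M[F]_n) :
  (forall i j, congr_mod c (A i j) (B i j)) -> congr_mod c (\det A) (\det B).
Proof.
move=> AB; apply: big_ind2 => [|x1 x2 y1 y2|s _]; first exact: congr_mod_refl O_0.
  exact: congr_modD.
apply: congr_modM; first exact/congr_mod_refl/O_X/O_N/O_1.
apply: big_ind2 => [|x1 x2 y1 y2|i _]; first exact: congr_mod_refl O_1.
  exact: congr_modM.
exact: AB.
Qed.

Lemma det_add1_scale n c (B : 'M[F]_n) : O c -> (forall i j, O (B i j)) ->
  exists a, O a /\ \det (1%:M + c *: B) = 1 + c * a.
Proof.
move=> Oc OB; have [|_ _ [a Oa e]] := @det_congr_mod n c (1%:M + c *: B) 1%:M.
  move=> i j; rewrite !mxE; split; [exact: O_D (O_nat _) (O_M _ _) | exact: O_nat |].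
  by exists (B i j) => //; rewrite addrC addrK.
by exists a; split; rewrite // -e det1 subrKC.
Qed.

Variable pi : F.
Hypotheses (O_pi : O pi) (O_pi_inv : ~ O pi^-1).
Hypothesis O_valuation : forall x : F, x != 0 ->
  exists (u : F) (k : int), [/\ O u, O u^-1 & x = u * pi ^ k].

Lemma pi_ndvd1 z : O z -> 1 != pi * z.
Proof. by move=> Oz; apply/eqP => e; apply: O_pi_inv; rewrite (mulr1_eq (esym e)). Qed.

Lemma add1_pi_neq0 b : O b -> 1 + pi * b != 0.
Proof.
move=> Ob; apply: contraNneq (pi_ndvd1 (O_N Ob)) => e.
by rewrite mulrN -[1](addrK (pi * b)) e sub0r.
Qed.

Lemma O_inv_add1_pi b : O b -> O (1 + pi * b)^-1.
Proof.
move=> Ob; have [u [[[|k]|k] [Ou Ou' ex]]] := O_valuation (add1_pi_neq0 Ob).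
- by rewrite ex expr0z mulr1.
- case/negP: (pi_ndvd1 (O_B (O_M Ou (O_X k O_pi)) Ob)).
  by rewrite mulrBr -[1](addrK (pi * b)) ex exprSz mulrCA exprnP.
- by rewrite ex NegzE -exprnN invfM invrK; exact: O_M Ou' (O_X _ O_pi).
Qed.

Variable m : nat.
Hypothesis m_gt0 : (0 < m)%N.

Lemma add1_pim a : O a -> exists2 b, O b & 1 + pi ^+ m * a = 1 + pi * b.
Proof.
move=> Oa; exists (pi ^+ m.-1 * a); first exact: O_M (O_X _ O_pi) Oa.
by rewrite mulrA -exprS prednK.
Qed.

Lemma add1_pim_neq0 a : O a -> 1 + pi ^+ m * a != 0.
Proof. by case/add1_pim => b Ob ->; exact: add1_pi_neq0. Qed.

Lemma add1_pim_inv a : O a ->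
  exists a', O a' /\ (1 + pi ^+ m * a)^-1 = 1 + pi ^+ m * a'.
Proof.
move=> Oa; exists (- a * (1 + pi ^+ m * a)^-1); split.
  by apply: O_M (O_N Oa) _; have [b Ob ->] := add1_pim Oa; exact: O_inv_add1_pi.
by field; exact: add1_pim_neq0.
Qed.

Lemma det_congr_sub_normal n : mx_normal_subgroup (@det_congr_sub F O pi n m).
Proof.
split.
- by move=> A [].
- by split; [exact: unitmx1 | exists 0; split; [exact: O_0 | rewrite det1 mulr0 addr0]].
- move=> A B [uA [a [Oa dA]]] [uB [b [Ob dB]]]; split; first by rewrite unitmx_mul uA.
  exists (a + b + pi ^+ m * a * b); split; last by rewrite det_mulmx dA dB; ring.
  exact: O_D (O_D Oa Ob) (O_M (O_M (O_X _ O_pi) Oa) Ob).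
- move=> A [uA [a [Oa dA]]]; split; first by rewrite unitmx_inv.
  by rewrite det_inv dA; exact: add1_pim_inv.
- move=> g A ug [uA dA]; split; first by rewrite !unitmx_mul ug uA unitmx_inv ug.
  by rewrite !det_mulmx det_inv mulrAC mulfV ?mul1r // -unitfE -unitmxE.
Qed.

Lemma congr_sub_det n (A : 'M[F]_n) : congr_sub O pi m A -> det_congr_sub O pi m A.
Proof.
case=> B [OB ->]; have [a [Oa dA]] := det_add1_scale (O_X m O_pi) OB.
by split; [rewrite unitmxE dA unitfE; exact: add1_pim_neq0 | exists a].
Qed.

Hypothesis pi_neq0 : pi != 0.
Variables (n : nat) (H : 'M[F]_n -> Prop).
Hypotheses (H_normal : mx_normal_subgroup H)
           (H_congr : forall B, congr_sub O pi m B -> H B).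

Lemma normal_transvection i j t : i != j -> H (transvection i j t).
Proof.
move=> nij; have [_ H1 _ _ HC] := H_normal.
have [-> | t0] := eqVneq t 0; first by rewrite transvection0.
have pim0 : pi ^+ m != 0 by rewrite expf_neq0.
set d := t / pi ^+ m; have d0 : d != 0 by rewrite mulf_neq0 ?invr_eq0.
have uD : dilation i d \in unitmx by rewrite unitmxE det_dilation unitfE.
have -> : transvection i j t =
    dilation i d *m transvection i j (pi ^+ m) *m invmx (dilation i d).
  by rewrite dilation_transvection // mulmxK // divfK.
apply: HC uD (H_congr _); exists (delta_mx i j); split=> // a b.
by rewrite mxE; exact: O_nat.
Qed.

Lemma normal_elementary T : elementary T -> H T.
Proof.
have [_ H1 HM _ _] := H_normal.
by elim=> // i j t T' nij _ HT'; exact: HM (normal_transvection _ nij) HT'.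
Qed.

End CongruenceSubgroups.

Unset Implicit Arguments.
Theorem lemma6p18 (p : nat) (F : fieldType) (O : F -> Prop) (pi : F)
  (n m : nat) :
  is_p_adic_field p O pi -> (0 < n)%N -> (0 < m)%N ->
  forall A : 'M[F]_n,
    normal_closure (congr_sub O pi m) A <-> det_congr_sub O pi m A.
Proof.
move=> [_ [O_sub [[O_pi pi_neq0 O_pi_inv] [O_val _]]]].
case: n => // n _ m_gt0 A; split.
  by apply; [exact: det_congr_sub_normal | exact: congr_sub_det].
case=> uA [a [Oa dA]] H H_normal H_congr; have [_ _ HM HI _] := H_normal.
have [T ET TA] := elementary_reduction uA.
rewrite -(mulKmx (elementary_unitmx ET) A) TA dA.
apply: HM (HI _ (normal_elementary O_sub pi_neq0 H_normal H_congr ET)) (H_congr _ _).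
exists (a *: delta_mx ord_max ord_max); split=> [i j|].
  by rewrite !mxE; apply: (O_M O_sub Oa); exact: O_nat.
by rewrite /dilation scalerA; congr (_ + _ *: _); rewrite addrC addKr.
Qed.
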